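(* Let $n\ge 2$ be an even integer and consider the configuration of $n$ lighthouses with center point light sources described in the context. Then the total dark area is infinite: $D(n)=\infty$. More precisely, for the target lighthouse $L_0$, no ray emitted by any other lighthouse passes through the region directly behind $L_0$ (on the side of $L_0$ away from the placement center $P$) in a way that bounds it, so the dark region behind $L_0$ is unbounded and of infinite area.
   Context: Setup (''lighthouse problem with center point light sources''): fix an integer $n\ge 1$ and a point $P$ (the placement center). There are $n$ lighthouses $L_0,L_1,\dots,L_{n-1}$, each an opaque closed disk of radius $1$; the center of $L_k$ is at distance $n$ from $P$, at polar angle $2\pi k/n$ around $P$ (so $L_0$'s center $C$ lies $n$ units to the right of $P$, and the lighthouses are numbered counter-clockwise). The illumination angle is $\alpha=2\pi/n$. Each lighthouse has a single point light source at its center, emitting light along straight rays within the angular sector of total angle $\alpha$ symmetric about the direction from its center toward $P$ (for $n=1$ this means all directions). Light is blocked by the lighthouse disks. A point outside all disks is dark if no such ray reaches it. By symmetry every lighthouse has a congruent dark region behind it (on the side away from $P$); $d(n)$ denotes the area of the dark region behind one lighthouse and $D(n)=n\cdot d(n)$ is the total dark area. *)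

(* classical reals. Coordinates: placement center P = (0,0),
   L_0's center C = (n,0). *)
From Stdlib Require Import Reals Lra Lia.
Open Scope R_scope.

Definition pt : Type := (R * R)%type.

Definition center (n k : nat) : pt :=
  (INR n * cos (2 * PI * INR k / INR n), INR n * sin (2 * PI * INR k / INR n)).

Definition in_disk (c x : pt) : Prop :=
  (fst x - fst c) ^ 2 + (snd x - snd c) ^ 2 <= 1.

Definition alpha (n : nat) : R := 2 * PI / INR n.

(* x lies in the closed angular sector of total angle alpha emitted from the
   center of L_k, symmetric about the direction from that center toward P=(0,0):
   the angle between (x - c_k) and (P - c_k) is at most alpha/2. *)
Definition in_sector (n k : nat) (x : pt) : Prop :=
  let c := center n k in
  let dx := fst x - fst c in
  let dy := snd x - snd c in
  dx * (- fst c) + dy * (- snd c) >=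
    cos (alpha n / 2) * sqrt (dx ^ 2 + dy ^ 2) * sqrt (fst c ^ 2 + snd c ^ 2).

Definition seg (c x : pt) (s : R) : pt :=
  (fst c + s * (fst x - fst c), snd c + s * (snd x - snd c)).

Definition lit_by (n k : nat) (x : pt) : Prop :=
  in_sector n k x /\
  forall j : nat, (j < n)%nat -> j <> k ->
    forall s : R, 0 <= s <= 1 -> ~ in_disk (center n j) (seg (center n k) x s).

Definition lit (n : nat) (x : pt) : Prop :=
  exists k : nat, (k < n)%nat /\ lit_by n k x.

Definition dark (n : nat) (x : pt) : Prop :=
  (forall k : nat, (k < n)%nat -> ~ in_disk (center n k) x) /\ ~ lit n x.

(* "behind L_0": the open half-plane beyond the line through C perpendicular
   to PC, on the side away from P *)
Definition behind_L0 (n : nat) (x : pt) : Prop := INR n < fst x.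

(* Write n = 2m; then L_m sits at (-n, 0), diametrically opposite
   L_0 = (n, 0).  Consider points (x, y) with 0 <= y <= 1 and x large.  The ray
   from L_m to such a point crosses the line x = n at height 2ny/(x+n) <= 1, so
   it is blocked by L_0.  Every other source L_k lies at polar angle 2 pi k/n
   with cos(2 pi k/n) >= -cos(2 pi/n), so its axis (the direction towards P)
   makes an angle of at least 2 pi/n with the positive x-axis.  As the point
   recedes to the right, its direction from L_k tends to the positive x-axis,
   hence eventually leaves the sector of half-angle pi/n around that axis.  So a whole strip
   [X, oo) x [0, 1] is dark, and it contains rectangles of any area. *)

From Stdlib Require Import Reals Lra Lia.
Open Scope R_scope.

Lemma cos_2PI_sub (x : R) : cos (2 * PI - x) = cos x.
Proof. rewrite cos_minus, cos_2PI, sin_2PI; ring. Qed.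

Lemma neg_cos_le_cos_multiple (m k : nat) :
  (1 <= m)%nat -> (k < 2 * m)%nat -> k <> m ->
  - cos (PI / INR m) <= cos (PI / INR m * INR k).
Proof.
  intros Hm Hk Hkm.
  assert (Hm1 : 1 <= INR m) by (apply (le_INR 1); lia).
  pose proof PI_RGT_0.
  set (t := PI / INR m).
  assert (Ht : PI = t * INR m) by (unfold t; field; lra).
  assert (Ht0 : 0 < t) by (unfold t; apply Rdiv_lt_0_compat; lra).
  rewrite <- Rtrigo_facts.cos_pi_minus, Ht.
  assert (Hk0 : 0 <= INR k) by apply pos_INR.
  destruct (Nat.lt_ge_cases k m) as [Hlt | Hge].
  - assert (INR k + 1 <= INR m) by (rewrite <- S_INR; apply le_INR; lia).
    apply cos_decr_1; nra.
  - assert (INR m + 1 <= INR k) by (rewrite <- S_INR; apply le_INR; lia).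
    assert (INR k + 1 <= 2 * INR m)
      by (rewrite <- S_INR, <- (mult_INR 2); apply le_INR; lia).
    rewrite <- (cos_2PI_sub (t * INR k)), Ht.
    apply cos_decr_1; nra.
Qed.

Lemma center_norm (n k : nat) :
  sqrt (fst (center n k) ^ 2 + snd (center n k) ^ 2) = INR n.
Proof.
  unfold center; cbn [fst snd].
  set (phi := 2 * PI * INR k / INR n).
  replace ((INR n * cos phi) ^ 2 + (INR n * sin phi) ^ 2) with (INR n ^ 2)
    by (pose proof (sin2_cos2 phi); unfold Rsqr in *; nra).
  apply sqrt_pow2, pos_INR.
Qed.

Lemma not_in_disk_of_far (c x : pt) : 1 < fst x - fst c -> ~ in_disk c x.
Proof.
  unfold in_disk; intros Hfar Hd.
  pose proof (pow2_ge_0 (snd x - snd c)); nra.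
Qed.

(* The segment from (-r, 0) to (x, y) crosses the line through (r, 0) at
   parameter 2r/(x+r), at height 2ry/(x+r). *)
Lemma seg_meets_opposite_disk (r x y : R) :
  0 < r -> r <= x -> 0 <= y -> 2 * r * y <= x + r ->
  in_disk (r, 0) (seg (- r, 0) (x, y) (2 * r / (x + r))).
Proof.
  intros Hr Hx Hy Hyx.
  unfold in_disk, seg; cbn [fst snd].
  replace (- r + 2 * r / (x + r) * (x - - r) - r) with 0 by (field; lra).
  replace (0 + 2 * r / (x + r) * (y - 0) - 0) with (2 * r * y / (x + r))
    by (field; lra).
  assert (0 <= 2 * r * y / (x + r) <= 1).
  { split.
    - apply Rmult_le_pos; [nra | apply Rlt_le, Rinv_0_lt_compat; lra].
    - apply Rmult_le_reg_r with (x + r); [lra |].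
      unfold Rdiv; rewrite Rmult_assoc, Rinv_l; lra. }
  nra.
Qed.

(* With c_k = n (cos phi, sin phi), membership in the sector forces
   -(dx cos phi + dy sin phi) >= cos(alpha/2) |d| >= cos(alpha/2) dx. *)
Lemma not_in_sector_of_far (n k : nat) (x y : R) :
  0 < INR n -> 0 <= cos (alpha n / 2) ->
  let phi := 2 * PI * INR k / INR n in
  0 < x - INR n * cos phi ->
  Rabs (y - INR n * sin phi) <
    (x - INR n * cos phi) * (cos phi + cos (alpha n / 2)) ->
  ~ in_sector n k (x, y).
Proof.
  intros Hn HcA phi Hdx Hdy Hsec.
  unfold in_sector in Hsec; cbv zeta in Hsec.
  rewrite center_norm in Hsec.
  unfold center in Hsec; cbn [fst snd] in Hsec; fold phi in Hsec.
  set (cA := cos (alpha n / 2)) in *.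
  set (dx := x - INR n * cos phi) in *.
  set (dy := y - INR n * sin phi) in *.
  assert (Hd : dx <= sqrt (dx ^ 2 + dy ^ 2)).
  { rewrite <- (sqrt_pow2 dx) at 1 by lra.
    apply sqrt_le_1_alt; pose proof (pow2_ge_0 dy); lra. }
  assert (-dy * sin phi <= Rabs dy).
  { pose proof (SIN_bound phi).
    unfold Rabs; destruct (Rcase_abs dy); nra. }
  assert (cA * dx <= cA * sqrt (dx ^ 2 + dy ^ 2)) by nra.
  nra.
Qed.

Section EvenConfiguration.

Variable m : nat.
Hypothesis Hm : (1 <= m)%nat.

Let n := (2 * m)%nat.

Lemma INR_n_pos : 0 < INR n.
Proof. apply lt_0_INR; unfold n; lia. Qed.

Lemma INR_n_eq : INR n = 2 * INR m.
Proof. unfold n; rewrite mult_INR; reflexivity. Qed.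

Lemma INR_m_ge1 : 1 <= INR m.
Proof. apply (le_INR 1); lia. Qed.

Lemma half_alpha_eq : alpha n / 2 = PI / (2 * INR m).
Proof. pose proof INR_m_ge1; unfold alpha; rewrite INR_n_eq; field; lra. Qed.

Lemma center_angle_eq (k : nat) : 2 * PI * INR k / INR n = PI / INR m * INR k.
Proof. pose proof INR_m_ge1; rewrite INR_n_eq; field; lra. Qed.

Lemma cos_half_alpha_nonneg : 0 <= cos (alpha n / 2).
Proof.
  pose proof INR_m_ge1; pose proof PI_RGT_0.
  rewrite half_alpha_eq; apply cos_ge_0.
  - apply Rle_trans with 0; [lra | apply Rlt_le, Rdiv_lt_0_compat; lra].
  - apply Rmult_le_reg_r with (2 * INR m); [lra |].
    unfold Rdiv; rewrite Rmult_assoc, Rinv_l; nra.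
Qed.

Definition angle_gap : R := cos (alpha n / 2) - cos (PI / INR m).

Lemma angle_gap_pos : 0 < angle_gap.
Proof.
  pose proof INR_m_ge1; pose proof PI_RGT_0.
  unfold angle_gap; rewrite half_alpha_eq.
  assert (0 < PI / (2 * INR m)) by (apply Rdiv_lt_0_compat; lra).
  replace (PI / INR m) with (2 * (PI / (2 * INR m))) by (field; lra).
  assert (PI / (2 * INR m) <= PI / 2).
  { apply Rmult_le_reg_r with (2 * INR m); [lra |].
    unfold Rdiv; rewrite Rmult_assoc, Rinv_l; nra. }
  enough (cos (2 * (PI / (2 * INR m))) < cos (PI / (2 * INR m))) by lra.
  apply cos_decreasing_1; lra.
Qed.

Lemma center_first : center n 0 = (INR n, 0).
Proof.
  unfold center; rewrite center_angle_eq; simpl INR.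
  rewrite Rmult_0_r, cos_0, sin_0; f_equal; ring.
Qed.

Lemma center_opposite : center n m = (- INR n, 0).
Proof.
  pose proof INR_m_ge1.
  unfold center; rewrite center_angle_eq.
  replace (PI / INR m * INR m) with PI by (field; lra).
  rewrite cos_PI, sin_PI; f_equal; ring.
Qed.

Lemma not_lit_by_opposite (x y : R) :
  INR n <= x -> 0 <= y <= 1 -> ~ lit_by n m (x, y).
Proof.
  intros Hx Hy [_ Hblocked].
  pose proof INR_m_ge1.
  pose proof INR_n_pos as Hn.
  apply (Hblocked 0%nat) with (s := 2 * INR n / (x + INR n)).
  - unfold n; lia.
  - lia.
  - split.
    + apply Rlt_le, Rdiv_lt_0_compat; lra.
    + apply Rmult_le_reg_r with (x + INR n); [lra |].
      unfold Rdiv; rewrite Rmult_assoc, Rinv_l; lra.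
  - rewrite center_first, center_opposite.
    apply seg_meets_opposite_disk; nra.
Qed.

(* Beyond this abscissa, (x - n) * angle_gap exceeds the bound 1 + n on the
   vertical offset |y - n sin phi| of a point of the strip from any source. *)
Definition dark_abscissa : R := INR n + 1 + (2 + INR n) / angle_gap.

Lemma dark_abscissa_gt : INR n + 1 < dark_abscissa.
Proof.
  pose proof angle_gap_pos; pose proof (pos_INR n).
  unfold dark_abscissa.
  assert (0 < (2 + INR n) / angle_gap) by (apply Rdiv_lt_0_compat; lra).
  lra.
Qed.

Lemma not_lit_by_other (k : nat) (x y : R) :
  (k < n)%nat -> k <> m -> dark_abscissa <= x -> 0 <= y <= 1 ->
  ~ lit_by n k (x, y).
Proof.
  intros Hk Hkm Hx Hy [Hsec _].
  pose proof INR_m_ge1; pose proof angle_gap_pos; pose proof dark_abscissa_gt.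
  pose proof INR_n_pos as Hn.
  set (phi := 2 * PI * INR k / INR n).
  pose proof (COS_bound phi); pose proof (SIN_bound phi).
  assert (Hcos : - cos (PI / INR m) <= cos phi)
    by (unfold phi; rewrite center_angle_eq; apply neg_cos_le_cos_multiple; fold n; lia).
  assert (Hfar : 2 + INR n < (x - INR n) * angle_gap).
  { assert ((2 + INR n) / angle_gap * angle_gap = 2 + INR n) by (field; lra).
    unfold dark_abscissa in Hx; nra. }
  assert (Hdy : Rabs (y - INR n * sin phi) <= 1 + INR n) by (apply Rabs_le; nra).
  assert (Hslope : (x - INR n) * angle_gap
                   <= (x - INR n * cos phi) * (cos phi + cos (alpha n / 2)))
    by (apply Rmult_le_compat; unfold angle_gap in *; nra).
  revert Hsec; apply not_in_sector_of_far; fold phi;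
    [exact Hn | apply cos_half_alpha_nonneg | nra | nra].
Qed.

Lemma dark_of_far (x y : R) :
  dark_abscissa <= x -> 0 <= y <= 1 -> dark n (x, y).
Proof.
  intros Hx Hy; pose proof dark_abscissa_gt.
  split.
  - intros k _; apply not_in_disk_of_far; unfold center; cbn [fst snd].
    pose proof (COS_bound (2 * PI * INR k / INR n)); pose proof (pos_INR n); nra.
  - intros [k [Hk Hlit]].
    destruct (Nat.eq_dec k m) as [-> | Hkm].
    + revert Hlit; apply not_lit_by_opposite; lra.
    + revert Hlit; apply not_lit_by_other; assumption.
Qed.

End EvenConfiguration.

Theorem mainTheorem1 (n : nat) (Hn : (2 <= n)%nat) (Heven : Nat.Even n) :
  forall M : R, exists a b c d : R,
    a <= b /\ c <= d /\ M <= (b - a) * (d - c) /\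
    forall x y : R, a <= x <= b -> c <= y <= d ->
      behind_L0 n (x, y) /\ dark n (x, y).
Proof.
  intro M.
  destruct Heven as [m ->].
  assert (Hm : (1 <= m)%nat) by lia.
  pose proof (dark_abscissa_gt m Hm).
  pose proof (Rle_abs M); pose proof (Rabs_pos M).
  exists (dark_abscissa m), (dark_abscissa m + Rabs M), 0, 1.
  split; [lra | split; [lra | split; [lra |]]].
  intros x y Hx Hy; split.
  - unfold behind_L0; cbn [fst]; lra.
  - apply (dark_of_far m Hm); lra.
Qed.
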